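(* Let $\mathcal{P}$ be a polyomino and $I_{\mathcal{P}}\subset S=\mathbb{K}[x_v\mid v\in V(\mathcal{P})]$ its polyomino ideal over a field $\mathbb{K}$. If there exists a zig-zag walk in $\mathcal{P}$, then $I_{\mathcal{P}}$ is not prime.
   Context: For $a\in\mathbb{N}^2$ the cell $[a,a+(1,1)]$ has vertices $a,a+(1,0),a+(0,1),a+(1,1)$ and four edges. A polyomino $\mathcal{P}$ is a finite nonempty set of cells such that any two cells are joined by a sequence of cells of $\mathcal{P}$, consecutive ones sharing an edge. $V(\mathcal{P})$ is the union of the vertex sets of its cells. For $a=(i,j)$, $b=(k,\ell)$ with $i<k$, $j<\ell$, the interval $[a,b]$ has diagonal corners $a,b$ and anti-diagonal corners $(i,\ell),(k,j)$; it is an inner interval of $\mathcal{P}$ if all its cells belong to $\mathcal{P}$. $I_{\mathcal{P}}$ is generated by the binomials $x_ax_b-x_cx_d$ for inner intervals $[a,b]$ with anti-diagonal corners $c,d$. A horizontal (resp. vertical) edge interval of $\mathcal{P}$ is a set of lattice points on a horizontal (resp. vertical) line, consecutive in that line, such that each pair of consecutive points forms an edge of some cell of $\mathcal{P}$. A zig-zag walk of $\mathcal{P}$ is a sequence of distinct inner intervals $I_1,\dots,I_\ell$ of $\mathcal{P}$ such that, for each $i$, $v_i,z_i$ are the diagonal (resp. anti-diagonal) corners and $u_i,v_{i+1}$ the anti-diagonal (resp. diagonal) corners of $I_i$, and: (Z1) $I_1\cap I_\ell=\{v_1\}=\{v_{\ell+1}\}$ and $I_i\cap I_{i+1}=\{v_{i+1}\}$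 for $i=1,\dots,\ell-1$; (Z2) $v_i$ and $v_{i+1}$ lie on a common edge interval of $\mathcal{P}$ for $i=1,\dots,\ell$; (Z3) for $i\ne j$ there is no inner interval of $\mathcal{P}$ containing both $z_i$ and $z_j$. *)

From HB Require Import structures.
From mathcomp Require Import all_boot all_order all_algebra.
From mathcomp Require Import finmap.
From mathcomp Require Import mpoly.

Set Implicit Arguments.
Unset Strict Implicit.
Unset Printing Implicit Defensive.

Import GRing.Theory.
Local Open Scope fset_scope.

(* Lattice points of N^2 and cells.  A cell [a, a+(1,1)] is represented by
   its lower-left corner a.  A polyomino is a finite set of cells. *)
Definition point := (nat * nat)%type.

Definition cell_vertices (a : point) : seq point :=
  [:: a; (a.1.+1, a.2); (a.1, a.2.+1); (a.1.+1, a.2.+1)].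

Definition cell_edge (a p q : point) : Prop :=
  let e x y := ((p == x) && (q == y)) || ((p == y) && (q == x)) in
  [\/ e a (a.1.+1, a.2), e a (a.1, a.2.+1),
      e (a.1.+1, a.2) (a.1.+1, a.2.+1) | e (a.1, a.2.+1) (a.1.+1, a.2.+1)].

Definition share_edge (a b : point) : Prop :=
  exists p q, cell_edge a p q /\ cell_edge b p q.

Definition is_polyomino (P : {fset point}) : Prop :=
  P != fset0 /\
  forall a b, a \in P -> b \in P ->
    exists s : seq point,
      [/\ all (fun c => c \in P) s, last a s = b &
          forall i, i < size s -> share_edge (nth a (a :: s) i) (nth a s i)].

(* V(P), as a duplicate-free list (fixes an enumeration of the variables) *)
Definition Vseq (P : {fset point}) : seq point :=
  undup (flatten [seq cell_vertices a | a <- enum_fset P]).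

Definition in_V (P : {fset point}) (v : point) : bool := v \in Vseq P.

Definition interval_ok (a b : point) : bool := (a.1 < b.1) && (a.2 < b.2).

Definition in_interval (a b c : point) : bool :=
  [&& a.1 <= c.1, c.1 <= b.1, a.2 <= c.2 & c.2 <= b.2].

Definition inner_interval (P : {fset point}) (a b : point) : Prop :=
  interval_ok a b /\
  forall c : point, a.1 <= c.1 < b.1 -> a.2 <= c.2 < b.2 -> c \in P.

Definition adc1 (a b : point) : point := (a.1, b.2).
Definition adc2 (a b : point) : point := (b.1, a.2).

(* The polynomial ring S = K[x_v | v in V(P)]; the variable x_v is
   'X_(index of v in Vseq P).  (For v not in V(P) we put 0; this value is
   never used by the generators, whose corners all lie in V(P).) *)
Notation Sring K P := {mpoly K[size (Vseq P)]}.

Definition xvar (K : fieldType) (P : {fset point}) (v : point) : Sring K P :=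
  match insub (index v (Vseq P)) : option 'I_(size (Vseq P)) with
  | Some i => 'X_i
  | None => 0%R
  end.

Definition polyomino_gen (K : fieldType) (P : {fset point}) (f : Sring K P) : Prop :=
  exists a b, inner_interval P a b /\
    (f = xvar K P a * xvar K P b - xvar K P (adc1 a b) * xvar K P (adc2 a b))%R.

Definition in_gen_ideal (R : comNzRingType) (G : R -> Prop) (f : R) : Prop :=
  exists s : seq (R * R),
    (forall i, i < size s -> G (nth (0, 0)%R s i).2) /\
    (f = \sum_(i < size s) (nth (0, 0) s i).1 * (nth (0, 0) s i).2)%R.

Definition polyomino_ideal (K : fieldType) (P : {fset point}) (f : Sring K P) : Prop :=
  in_gen_ideal (@polyomino_gen K P) f.

Definition prime_ideal (R : comNzRingType) (I : R -> Prop) : Prop :=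
  ~ I 1%R /\ forall f g : R, I (f * g)%R -> I f \/ I g.

Definition hor_edge_interval (P : {fset point}) (j lo hi : nat) : Prop :=
  forall x, lo <= x < hi -> exists2 c, c \in P & cell_edge c (x, j) (x.+1, j).

Definition ver_edge_interval (P : {fset point}) (i lo hi : nat) : Prop :=
  forall y, lo <= y < hi -> exists2 c, c \in P & cell_edge c (i, y) (i, y.+1).

Definition on_common_edge_interval (P : {fset point}) (p q : point) : Prop :=
  (exists j lo hi, hor_edge_interval P j lo hi /\
     [/\ p.2 = j, q.2 = j, lo <= p.1 <= hi & lo <= q.1 <= hi]) \/
  (exists i lo hi, ver_edge_interval P i lo hi /\
     [/\ p.1 = i, q.1 = i, lo <= p.2 <= hi & lo <= q.2 <= hi]).

Definition meet_single (I J : point * point) (p : point) : Prop :=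
  forall c : point, (in_interval I.1 I.2 c && in_interval J.1 J.2 c) <-> c = p.

Definition same_pair (x y a b : point) : bool :=
  ((x == a) && (y == b)) || ((x == b) && (y == a)).

(* Zig-zag walk I_1..I_l (0-indexed: Is`_0 .. Is`_(l-1)), each interval
   given by its diagonal corners (a,b); v has indices 0..l with v l = v 0. *)
Definition zigzag_walk (P : {fset point}) (Is : seq (point * point))
    (v z u : nat -> point) : Prop :=
  let l := size Is in
  let I i := nth ((0,0),(0,0)) Is i in
  [/\ 0 < l, uniq Is &
      (forall i, i < l -> inner_interval P (I i).1 (I i).2)] /\
  [/\
      (forall i, i < l ->
         (same_pair (v i) (z i) (I i).1 (I i).2 &&
          same_pair (u i) (v i.+1) (adc1 (I i).1 (I i).2) (adc2 (I i).1 (I i).2))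
      || (same_pair (v i) (z i) (adc1 (I i).1 (I i).2) (adc2 (I i).1 (I i).2) &&
          same_pair (u i) (v i.+1) (I i).1 (I i).2)),
      [/\ meet_single (I 0) (I l.-1) (v 0), v l = v 0 &
          forall i, i.+1 < l -> meet_single (I i) (I i.+1) (v i.+1)],
      (forall i, i < l -> on_common_edge_interval P (v i) (v i.+1)) &
      (forall i j, i < l -> j < l -> i <> j ->
         ~ exists a b, inner_interval P a b /\
             in_interval a b (z i) /\ in_interval a b (z j))].

Definition has_zigzag_walk (P : {fset point}) : Prop :=
  exists Is v z u, zigzag_walk P Is v z u.

From mathcomp Require Import all_boot all_order all_algebra.
From mathcomp Require Import finmap mpoly.
From mathcomp Require Import ring zify.

(* Multiplying the binomials x_{v_i} x_{z_i} - x_{u_i} x_{v_{i+1}} of a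
   zig-zag walk along the cycle telescopes, and since v_{l+1} = v_1 the
   result factors as (prod x_{v_i}) (prod x_{z_i} - prod x_{u_i}) in I_P.
   Neither factor lies in I_P: sending every variable to 1 kills I_P but not a
   monomial, and sending x_{z_j} to X_j and every other variable to 0 kills
   I_P by (Z3) (no inner interval holds two z's, so every monomial of a
   generator vanishes), maps prod x_{z_i} to X_1 ... X_l, but kills x_{u_1},
   as u_1 shares the interval I_1 with z_1. *)

Set Implicit Arguments.
Unset Strict Implicit.
Unset Printing Implicit Defensive.

Import GRing.Theory.
Local Open Scope ring_scope.

Section GeneratedIdeal.
Variables (R : comNzRingType) (G : R -> Prop).

Lemma sum_ord_nth_pairs (s : seq (R * R)) :
  \sum_(i < size s) (nth (0, 0) s i).1 * (nth (0, 0) s i).2 =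
  \sum_(x <- s) x.1 * x.2.
Proof. by rewrite (big_nth (0, 0)) big_mkord. Qed.

Lemma in_gen_ideal0 : in_gen_ideal G 0.
Proof. by exists [::]; split => //; rewrite big_ord0. Qed.

Lemma in_gen_ideal_gen g : G g -> in_gen_ideal G g.
Proof. by move=> Gg; exists [:: (1, g)]; split; [case | rewrite big_ord1 mul1r]. Qed.

Lemma in_gen_idealD f g :
  in_gen_ideal G f -> in_gen_ideal G g -> in_gen_ideal G (f + g).
Proof.
move=> [s1 [G1 ->]] [s2 [G2 ->]]; exists (s1 ++ s2); split.
  move=> i; rewrite size_cat nth_cat; case: (ltnP i (size s1)) => [lt_i _ | le_s1i lt_i].
    exact: G1.
  by apply: G2; rewrite -(ltn_add2l (size s1)) subnKC.
by rewrite !sum_ord_nth_pairs big_cat.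
Qed.

Lemma in_gen_idealMl c f : in_gen_ideal G f -> in_gen_ideal G (c * f).
Proof.
move=> [s [Gs ->]]; exists [seq (c * x.1, x.2) | x <- s]; split.
  by move=> i; rewrite size_map => lt_i; rewrite (nth_map (0, 0)) //; apply: Gs.
rewrite !sum_ord_nth_pairs big_map mulr_sumr.
by apply: eq_bigr => x _; rewrite mulrA.
Qed.

Lemma in_gen_ideal_prodB n (F H : nat -> R) :
  (forall i, (i < n)%N -> in_gen_ideal G (F i - H i)) ->
  in_gen_ideal G (\prod_(i < n) F i - \prod_(i < n) H i).
Proof.
elim: n => [|n IHn] FH; first by rewrite !big_ord0 subrr; apply: in_gen_ideal0.
rewrite !big_ord_recr /=; set A := \prod_(i < n) _; set B := \prod_(i < n) _.
have -> : A * F n - B * H n = F n * (A - B) + B * (F n - H n) by ring.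
by apply: in_gen_idealD; apply: in_gen_idealMl; [apply: IHn => i /ltnW | ]; apply: FH.
Qed.

Lemma rmorph_in_gen_ideal_eq0 (S : nzRingType) (phi : {rmorphism R -> S}) f :
  (forall g, G g -> phi g = 0) -> in_gen_ideal G f -> phi f = 0.
Proof.
move=> phiG [s [Gs ->]]; rewrite rmorph_sum big1 // => i _.
by rewrite rmorphM (phiG _ (Gs i (ltn_ord i))) mulr0.
Qed.

End GeneratedIdeal.

Lemma prod_ord_shift_cyclic (R : comNzRingType) n (f : nat -> R) :
  f n = f 0 -> \prod_(i < n) f i.+1 = \prod_(i < n) f i.
Proof.
case: n => [|n] fn; first by rewrite !big_ord0.
by rewrite big_ord_recr big_ord_recl /= fn mulrC.
Qed.

Definition corners (a b : point) : seq point := [:: a; b; adc1 a b; adc2 a b].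

Definition opposite_corner_pairs (a b p q p' q' : point) : bool :=
  (same_pair p q a b && same_pair p' q' (adc1 a b) (adc2 a b))
  || (same_pair p q (adc1 a b) (adc2 a b) && same_pair p' q' a b).

Section IntervalCorners.
Variables (a b : point).
Hypothesis ab_ok : interval_ok a b.

Lemma corners_in_interval : {subset corners a b <= in_interval a b}.
Proof.
case: a b ab_ok => [a1 a2] [b1 b2] /andP /= [lt1 lt2] w.
rewrite !inE => /or4P [] /eqP ->; rewrite -topredE /in_interval /=; lia.
Qed.

Lemma diag_adc_neq p q :
  p \in [:: a; b] -> q \in [:: adc1 a b; adc2 a b] -> p != q.
Proof.
case: a b ab_ok => [a1 a2] [b1 b2] /andP /= [lt1 lt2].
rewrite !inE /adc1 /adc2 /= => /orP [] /eqP -> /orP [] /eqP ->;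
  rewrite xpair_eqE; lia.
Qed.

Lemma diag_neq : a != b.
Proof.
by case: a b ab_ok => [a1 a2] [b1 b2] /andP /= [lt1 _]; rewrite xpair_eqE; lia.
Qed.

Lemma adc_neq : adc1 a b != adc2 a b.
Proof.
case: a b ab_ok => [a1 a2] [b1 b2] /andP /= [lt1 _].
by rewrite /adc1 /adc2 /= xpair_eqE; lia.
Qed.

End IntervalCorners.

Lemma same_pair_mul (R : comNzRingType) (f : point -> R) p q c d :
  same_pair p q c d -> f p * f q = f c * f d.
Proof. by case/orP => /andP [/eqP -> /eqP ->] //; rewrite mulrC. Qed.

Lemma same_pair_mem p q c d : same_pair p q c d -> (p \in [:: c; d]) && (q \in [:: c; d]).
Proof. by case/orP => /andP [/eqP -> /eqP ->]; rewrite !inE !eqxx ?orbT. Qed.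

Lemma opposite_corner_pairs_sub a b p q p' q' :
  opposite_corner_pairs a b p q p' q' -> {subset [:: p; q; p'; q'] <= corners a b}.
Proof.
move=> /orP [] /andP [/same_pair_mem/andP [hp hq] /same_pair_mem/andP [hp' hq']] w;
  rewrite !inE => /or4P [] /eqP ->; move: hp hq hp' hq'; rewrite !inE;
  by do 4 case/orP=> /eqP ?; subst; rewrite !eqxx ?orbT.
Qed.

Lemma opposite_corner_pairs_neq a b p q p' q' : interval_ok a b ->
  opposite_corner_pairs a b p q p' q' -> q != p'.
Proof.
move=> ab_ok /orP [] /andP [/same_pair_mem/andP [_ hq] /same_pair_mem/andP [hp' _]].
  exact: (diag_adc_neq ab_ok hq hp').
by rewrite eq_sym; exact: (diag_adc_neq ab_ok hp' hq).
Qed.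

Section PolyominoIdeal.
Variables (K : fieldType) (P : {fset point}).
Local Notation x := (xvar K P).

Lemma cell_verticesV c w : c \in P -> w \in cell_vertices c -> in_V P w.
Proof.
by move=> cP wc; rewrite /in_V /Vseq mem_undup; apply/flatten_mapP; exists c.
Qed.

Lemma inner_interval_cornersV a b :
  inner_interval P a b -> {subset corners a b <= in_V P}.
Proof.
case: a b => [a1 a2] [b1 b2] [/andP /= [lt1 lt2] cellsP] w.
have cellP c1 c2 : (a1 <= c1 < b1)%N -> (a2 <= c2 < b2)%N -> (c1, c2) \in P.
  by move=> h1 h2; apply: cellsP.
rewrite !inE /adc1 /adc2 /= => /or4P [] /eqP ->.
- apply: (cell_verticesV (cellP a1 a2 _ _)); try lia.
  by rewrite inE eqxx.
- apply: (cell_verticesV (cellP b1.-1 b2.-1 _ _)); try lia.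
  by rewrite !inE !prednK ?eqxx ?orbT //; lia.
- apply: (cell_verticesV (cellP a1 b2.-1 _ _)); try lia.
  by rewrite !inE !prednK ?eqxx ?orbT //; lia.
- apply: (cell_verticesV (cellP b1.-1 a2 _ _)); try lia.
  by rewrite !inE !prednK ?eqxx ?orbT //; lia.
Qed.

Lemma opposite_corner_pairs_in_ideal a b p q p' q' : inner_interval P a b ->
  opposite_corner_pairs a b p q p' q' -> polyomino_ideal (x p * x q - x p' * x q').
Proof.
move=> abP /orP [] /andP [/(same_pair_mul x) -> /(same_pair_mul x) ->].
  by apply: in_gen_ideal_gen; exists a, b.
rewrite -opprB -mulN1r; apply: in_gen_idealMl; apply: in_gen_ideal_gen.
by exists a, b.
Qed.

Definition subst_vars (S : comNzRingType) (c : {rmorphism K -> S}) (t : point -> S) :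
  {rmorphism Sring K P -> S} :=
  mmap c (fun k : 'I_(size (Vseq P)) => t (nth (0, 0) (Vseq P) k)).

Lemma subst_vars_xvar S c t w : in_V P w -> @subst_vars S c t (x w) = t w.
Proof.
move=> wV; rewrite /xvar insubT ?index_mem // => lt_w.
by rewrite /subst_vars /= mmapX mmap1U /= nth_index.
Qed.

Lemma subst_vars_polyomino_ideal (S : comNzRingType) c (t : point -> S) f :
  (forall a b, inner_interval P a b -> t a * t b = t (adc1 a b) * t (adc2 a b)) ->
  polyomino_ideal f -> subst_vars c t f = 0.
Proof.
move=> tP; apply: rmorph_in_gen_ideal_eq0 => _ [a [b [abP ->]]].
have xE w : w \in corners a b -> subst_vars c t (x w) = t w.
  by move/(inner_interval_cornersV abP); apply: subst_vars_xvar.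
by rewrite rmorphB !rmorphM !xE ?inE ?eqxx ?orbT // tP // subrr.
Qed.

Lemma prod_xvar_notin_polyomino_ideal n (w : nat -> point) :
  (forall i, (i < n)%N -> in_V P (w i)) -> ~ polyomino_ideal (\prod_(i < n) x (w i)).
Proof.
move=> wV /(@subst_vars_polyomino_ideal _ idfun (fun _ => 1) _ (fun _ _ _ => erefl)).
rewrite rmorph_prod big1 => [/eqP|i _]; first by rewrite oner_eq0.
by rewrite subst_vars_xvar // wV.
Qed.

Section SeparatingSubstitution.
Variables (n : nat) (z : nat -> point).
Hypothesis z_separated : forall i j, (i < n)%N -> (j < n)%N -> i <> j ->
  ~ exists a b, inner_interval P a b /\ in_interval a b (z i) /\ in_interval a b (z j).

Definition zsubst (w : point) : {mpoly K[n]} :=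
  if [pick j : 'I_n | z j == w] is Some j then 'X_j else 0.

Lemma zsubst_z_neq0 i : (i < n)%N -> zsubst (z i) != 0.
Proof.
move=> lt_in; rewrite /zsubst.
case: pickP => [j _ | /(_ (Ordinal lt_in))]; last by rewrite /= eqxx.
apply/eqP => /(congr1 (mcoeff U_(j))); rewrite mcoeffXU mcoeff0 eqxx => /eqP.
by rewrite oner_eq0.
Qed.

Lemma zsubst_mul_eq0 a b p q : inner_interval P a b ->
  in_interval a b p -> in_interval a b q -> p != q -> zsubst p * zsubst q = 0.
Proof.
move=> abP ap aq; rewrite /zsubst.
case: pickP => [i /eqP zi | _]; last by rewrite mul0r.
case: pickP => [j /eqP zj | _]; last by rewrite mulr0.
rewrite -zi -zj => zij; exfalso; apply: (z_separated (ltn_ord i) (ltn_ord j)).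
  by move=> ij; rewrite ij eqxx in zij.
by exists a, b; rewrite zi zj.
Qed.

Lemma zsubst_binomial a b : inner_interval P a b ->
  zsubst a * zsubst b = zsubst (adc1 a b) * zsubst (adc2 a b).
Proof.
move=> abP; have [ab_ok _] := abP; have inI := corners_in_interval ab_ok.
by rewrite (zsubst_mul_eq0 abP _ _ (diag_neq ab_ok))
  ?(zsubst_mul_eq0 abP _ _ (adc_neq ab_ok)) //; apply: inI; rewrite !inE eqxx ?orbT.
Qed.

Lemma zsubst_eq0 a b i p : (i < n)%N -> inner_interval P a b ->
  in_interval a b (z i) -> in_interval a b p -> z i != p -> zsubst p = 0.
Proof.
move=> lt_in abP azi ap zip; apply/eqP.
have /eqP := zsubst_mul_eq0 abP azi ap zip.
by rewrite mulf_eq0 (negbTE (zsubst_z_neq0 lt_in)).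
Qed.
End SeparatingSubstitution.
End PolyominoIdeal.

Section ZigZagWalk.
Variables (K : fieldType) (P : {fset point}) (Is : seq (point * point)).
Variables (v z u : nat -> point).
Hypothesis walk : zigzag_walk P Is v z u.
Local Notation x := (xvar K P).
Local Notation l := (size Is).
Local Notation I i := (nth ((0, 0), (0, 0)) Is i).

Lemma zigzag_step i : (i < l)%N ->
  inner_interval P (I i).1 (I i).2 /\
  opposite_corner_pairs (I i).1 (I i).2 (v i) (z i) (u i) (v i.+1).
Proof.
by case: walk => [[_ _ inner] [opp _ _ _]] lt_il; split; [apply: inner | apply: opp].
Qed.

Lemma zigzag_cornersV i : (i < l)%N -> {subset [:: v i; z i; u i; v i.+1] <= in_V P}.
Proof.
move=> /zigzag_step [inner opp] w /(opposite_corner_pairs_sub opp).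
exact: inner_interval_cornersV.
Qed.

Lemma zigzag_telescope :
  polyomino_ideal
    ((\prod_(i < l) x (v i)) * (\prod_(i < l) x (z i) - \prod_(i < l) x (u i))).
Proof.
have [_ [_ [_ vl _] _ _]] := walk.
have := @in_gen_ideal_prodB _ (@polyomino_gen K P) l
  (fun i => x (v i) * x (z i)) (fun i => x (u i) * x (v i.+1)).
rewrite !big_split /= (prod_ord_shift_cyclic (f := fun i => x (v i))) ?vl //.
rewrite [X in _ - X]mulrC -mulrBr.
apply=> i /zigzag_step [inner opp]; exact: opposite_corner_pairs_in_ideal inner opp.
Qed.

Lemma zigzag_prodB_notin_ideal :
  ~ polyomino_ideal (\prod_(i < l) x (z i) - \prod_(i < l) x (u i)).
Proof.
have [[l_gt0 _ _] [_ _ _ z_sep]] := walk.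
pose phi := subst_vars P (mpolyC l (R := K)) (zsubst K l z).
have phi_z i : (i < l)%N -> phi (x (z i)) != 0.
  move=> lt_il; rewrite subst_vars_xvar ?zsubst_z_neq0 //.
  by apply: (zigzag_cornersV lt_il); rewrite !inE eqxx orbT.
have phi_u0 : phi (x (u (Ordinal l_gt0))) = 0.
  have [inner opp] := zigzag_step l_gt0; have [ab_ok _] := inner.
  have inI w : w \in [:: v 0; z 0; u 0; v 1] -> in_interval (I 0).1 (I 0).2 w.
    by move/(opposite_corner_pairs_sub opp); apply: corners_in_interval.
  rewrite subst_vars_xvar; last first.
    by apply: (zigzag_cornersV l_gt0); rewrite !inE eqxx !orbT.
  apply: (zsubst_eq0 K z_sep l_gt0 inner).
  - by apply: inI; rewrite !inE eqxx orbT.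
  - by apply: inI; rewrite !inE eqxx !orbT.
  - exact: opposite_corner_pairs_neq ab_ok opp.
move=> /(subst_vars_polyomino_ideal (mpolyC l (R := K)) (zsubst_binomial K z_sep)) /eqP.
rewrite rmorphB !rmorph_prod [X in _ - X](bigD1 (Ordinal l_gt0)) // phi_u0 /= mul0r subr0.
by apply/negP/prodf_neq0 => i _; apply: phi_z.
Qed.

End ZigZagWalk.

Theorem corollary3p6 (K : fieldType) (P : {fset (nat * nat)}) :
  is_polyomino P -> has_zigzag_walk P ->
  ~ prime_ideal (@polyomino_ideal K P).
Proof.
move=> _ [Is [v [z [u walk]]]] [_ prime].
have [] := prime _ _ (zigzag_telescope K walk).
  apply: prod_xvar_notin_polyomino_ideal => i /(zigzag_cornersV walk); apply.
  by rewrite inE eqxx.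
exact: zigzag_prodB_notin_ideal walk.
Qed.
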